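(* Let $r,K,\alpha,\phi,c,m_1,m_2,\lambda,a,d,\delta,\gamma,\sigma,\eta$ be positive constants with $\phi<1$ and $m_1>m_2$, and consider the system \[ \begin{cases} \dot X = rX\left(1-\frac{X}{K}\right)-\frac{\alpha XS}{c+X}-\frac{\phi\alpha XI}{c+X},\\[1mm] \dot S = \frac{m_1\alpha XS}{c+X}-\frac{\lambda AS}{a+A}-dS,\\[1mm] \dot I = \frac{m_2\phi\alpha XI}{c+X}+\frac{\lambda AS}{a+A}-(d+\delta)I,\\[1mm] \dot A = \gamma+\sigma(S+I)-\eta A. \end{cases} \] Then the axial equilibrium $E_0=(0,0,0,\gamma/\eta)$ is always unstable. *)

From Stdlib Require Import Reals.
From Coquelicot Require Import Coquelicot.
Open Scope R_scope.

Definition fX (r K alpha phi c : R) (X S I A : R) : R :=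
  r * X * (1 - X / K) - alpha * X * S / (c + X) - phi * alpha * X * I / (c + X).
Definition fS (alpha c m1 lambda a d : R) (X S I A : R) : R :=
  m1 * alpha * X * S / (c + X) - lambda * A * S / (a + A) - d * S.
Definition fI (alpha phi c m2 lambda a d delta : R) (X S I A : R) : R :=
  m2 * phi * alpha * X * I / (c + X) + lambda * A * S / (a + A) - (d + delta) * I.
Definition fA (gamma sigma eta : R) (X S I A : R) : R :=
  gamma + sigma * (S + I) - eta * A.

Definition dist4 (x1 x2 x3 x4 y1 y2 y3 y4 : R) : R :=
  sqrt ((x1 - y1)^2 + (x2 - y2)^2 + (x3 - y3)^2 + (x4 - y4)^2).

Definition is_forward_solution
  (r K alpha phi c m1 m2 lambda a d delta gamma sigma eta : R)
  (X S I A : R -> R) : Prop :=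
  forall t, 0 <= t ->
    is_derive X t (fX r K alpha phi c (X t) (S t) (I t) (A t)) /\
    is_derive S t (fS alpha c m1 lambda a d (X t) (S t) (I t) (A t)) /\
    is_derive I t (fI alpha phi c m2 lambda a d delta (X t) (S t) (I t) (A t)) /\
    is_derive A t (fA gamma sigma eta (X t) (S t) (I t) (A t)).

Definition lyapunov_unstable
  (r K alpha phi c m1 m2 lambda a d delta gamma sigma eta : R)
  (e1 e2 e3 e4 : R) : Prop :=
  exists eps, 0 < eps /\
   forall del, 0 < del ->
   exists X S I A : R -> R,
     is_forward_solution r K alpha phi c m1 m2 lambda a d delta gamma sigma eta X S I A /\
     dist4 (X 0) (S 0) (I 0) (A 0) e1 e2 e3 e4 < del /\
     exists t, 0 <= t /\ eps <= dist4 (X t) (S t) (I t) (A t) e1 e2 e3 e4.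

(** Along the invariant half-line S = I = 0, A = gamma/eta the system reduces
    to the logistic equation X' = r X (1 - X/K), whose explicit solution starting
    at any 0 < x0 <= K/2 climbs to K/2.  So arbitrarily close to the axial
    equilibrium there are trajectories leaving its (K/2)-ball: the equilibrium
    repels along the prey axis, where the linearisation has eigenvalue r > 0. *)
From Stdlib Require Import Reals Lra.
From Coquelicot Require Import Coquelicot.
Open Scope R_scope.

Definition logistic (r K x0 t : R) : R :=
  K * x0 * exp (r * t) / (K - x0 + x0 * exp (r * t)).

Section Logistic.

Variables r K x0 : R.
Hypotheses (Hx0 : 0 < x0) (Hx0K : x0 < K).

Lemma logistic_denom_pos (t : R) : 0 < K - x0 + x0 * exp (r * t).
Proof. pose proof (exp_pos (r * t)). nra. Qed.

Lemma logistic_0 : logistic r K x0 0 = x0.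
Proof. unfold logistic. rewrite Rmult_0_r, exp_0. field. lra. Qed.

Lemma is_derive_logistic (t : R) :
  is_derive (logistic r K x0) t
    (r * logistic r K x0 t * (1 - logistic r K x0 t / K)).
Proof.
  pose proof (logistic_denom_pos t). unfold logistic.
  auto_derive; [lra |]. field. lra.
Qed.

Definition logistic_half_time : R := ln ((K - x0) / x0) / r.

Lemma logistic_half_time_ge0 : 0 < r -> x0 <= K / 2 -> 0 <= logistic_half_time.
Proof.
  intros Hr Hx0half. unfold logistic_half_time.
  apply Rdiv_le_0_compat; [| exact Hr].
  rewrite <- ln_1. apply ln_le; [lra |].
  apply Rcomplements.Rle_div_r; lra.
Qed.

Lemma logistic_at_half_time : r <> 0 -> logistic r K x0 logistic_half_time = K / 2.
Proof.
  intros Hr. unfold logistic, logistic_half_time.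
  replace (r * (ln ((K - x0) / x0) / r)) with (ln ((K - x0) / x0)) by (field; exact Hr).
  rewrite exp_ln by (apply Rdiv_lt_0_compat; lra).
  field. lra.
Qed.

End Logistic.

Lemma dist4_axial (x g : R) : dist4 x 0 0 g 0 0 0 g = Rabs x.
Proof.
  unfold dist4.
  replace ((x - 0) ^ 2 + (0 - 0) ^ 2 + (0 - 0) ^ 2 + (g - g) ^ 2) with (Rsqr x)
    by (unfold Rsqr; ring).
  apply sqrt_Rsqr_abs.
Qed.

Lemma logistic_axial_forward_solution
  (r K alpha phi c m1 m2 lambda a d delta gamma sigma eta x0 : R) :
  eta <> 0 -> 0 < x0 < K ->
  is_forward_solution r K alpha phi c m1 m2 lambda a d delta gamma sigma eta
    (logistic r K x0) (fun _ => 0) (fun _ => 0) (fun _ => gamma / eta).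
Proof.
  intros Heta [Hx0 Hx0K] t _.
  split; [| split; [| split]].
  - unfold fX.
    replace (r * logistic r K x0 t * (1 - logistic r K x0 t / K)
             - alpha * logistic r K x0 t * 0 / (c + logistic r K x0 t)
             - phi * alpha * logistic r K x0 t * 0 / (c + logistic r K x0 t))
      with (r * logistic r K x0 t * (1 - logistic r K x0 t / K))
      by (unfold Rdiv; ring).
    exact (is_derive_logistic r K x0 Hx0 Hx0K t).
  - unfold fS. auto_derive; [easy |]. unfold Rdiv. ring.
  - unfold fI. auto_derive; [easy |]. unfold Rdiv. ring.
  - unfold fA. auto_derive; [easy |]. field. exact Heta.
Qed.

Theorem theorem2
  (r K alpha phi c m1 m2 lambda a d delta gamma sigma eta : R)
  (Hr : 0 < r) (HK : 0 < K) (Halpha : 0 < alpha) (Hphi : 0 < phi) (Hc : 0 < c)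
  (Hm1 : 0 < m1) (Hm2 : 0 < m2) (Hlambda : 0 < lambda) (Ha : 0 < a) (Hd : 0 < d)
  (Hdelta : 0 < delta) (Hgamma : 0 < gamma) (Hsigma : 0 < sigma) (Heta : 0 < eta)
  (Hphi1 : phi < 1) (Hm12 : m2 < m1) :
  lyapunov_unstable r K alpha phi c m1 m2 lambda a d delta gamma sigma eta
    0 0 0 (gamma / eta).
Proof.
  exists (K / 2). split; [lra |].
  intros del Hdel.
  set (x0 := Rmin (del / 2) (K / 2)).
  assert (Hx0 : 0 < x0) by (apply Rmin_glb_lt; lra).
  assert (Hx0K : x0 <= K / 2) by apply Rmin_r.
  assert (Hx0del : x0 <= del / 2) by apply Rmin_l.
  exists (logistic r K x0), (fun _ => 0), (fun _ => 0), (fun _ => gamma / eta).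
  split; [| split].
  - apply logistic_axial_forward_solution; lra.
  - rewrite dist4_axial, logistic_0, Rabs_pos_eq; lra.
  - exists (logistic_half_time r K x0). split.
    + apply logistic_half_time_ge0; lra.
    + rewrite dist4_axial, logistic_at_half_time, Rabs_pos_eq; lra.
Qed.
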